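(* Let $p\equiv 1\bmod 4$ be a prime and let $\alpha>0$ and $0<\beta<2$ be such that \[ \bigg|\sum_{a,b\in S}\chi(a-b)\bigg|<|S|^{2-\beta}\qquad\text{for all } S\subseteq\mathbb{F}_p \text{ with } |S|>p^\alpha . \] Then for any $\tau\ge 2\alpha/(2-\beta)$ and any disjoint sets $I,J\subseteq\mathbb{F}_p$ with $|J|\le|I|\le p^{2\tau/(2-\beta)}$, we have \[ \bigg|\sum_{i\in I,\,j\in J}\chi(i-j)\bigg|\le p^\tau\sqrt{3|I||J|}. \]
   Context: $\mathbb{F}_p$ is the field with $p$ elements and $\chi:\mathbb{F}_p\to\{-1,0,1\}$ is the Legendre symbol: $\chi(0)=0$, $\chi(x)=1$ if $x$ is a nonzero square in $\mathbb{F}_p$, and $\chi(x)=-1$ otherwise. *)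

From mathcomp Require Import all_boot all_order all_algebra.
From Stdlib Require Import Reals.
From mathcomp Require Import Rstruct.
Set Implicit Arguments. Unset Strict Implicit. Unset Printing Implicit Defensive.

Definition legendre (p : nat) (x : 'F_p) : R :=
  if x == GRing.zero then 0%R
  else if [exists y : 'F_p, GRing.mul y y == x] then 1%R else (-1)%R.

Definition charsum (p : nat) (I J : {set 'F_p}) : R :=
  \big[Rplus/0%R]_(i in I) \big[Rplus/0%R]_(j in J) legendre (GRing.add i (GRing.opp j)).

From mathcomp Require Import all_boot all_order all_algebra cyclic finfield.
From Stdlib Require Import Reals Lra.
From mathcomp Require Import Rstruct.
Set Implicit Arguments. Unset Strict Implicit. Unset Printing Implicit Defensive.

(* Since p = 1 mod 4, -1 is a square, so chi(i - j) is symmetric in i, j and the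
   sum over (I u J)^2 equals chi(I,I) + 2 X + chi(J,J), X being the cross sum.
   A set S with |S| <= c |I| has |chi(S,S)| <= c^2 p^(2 tau): by the hypothesis
   when |S| > p^alpha, as |I|^(2 - beta) <= p^(2 tau); trivially otherwise, as
   p^(2 alpha) <= p^(2 tau).  Taking S = I, J (c = 1) and S = I u J (c = 2)
   gives |X| <= 3 p^(2 tau), and multiplying by the trivial |X| <= |I||J|
   yields |X|^2 <= 3 p^(2 tau) |I||J|. *)

Section MinusOneSquare.
Import GRing.Theory.
Local Open Scope ring_scope.

Lemma Fp_sqrtN1 (p : nat) : prime p -> modn p 4 = 1%nat -> exists w : 'F_p, w * w = -1.
Proof.
move=> p_pr p_mod4; have p_gt1 := prime_gt1 p_pr.
have /hasP[z _ z_prim] : has (p.-1).-primitive_root (enum [pred x : 'F_p | x != 0]).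
  apply: has_prim_root; first by rewrite -ltnS prednK ?(ltnW p_gt1).
  - apply/allP => x; rewrite mem_enum inE => x_neq0; rewrite unity_rootE.
    have xp : x ^+ p = x by have := expf_card x; rewrite card_Fp.
    by apply/eqP/(mulIf x_neq0); rewrite mul1r -exprSr prednK ?(ltnW p_gt1).
  - exact: enum_uniq.
  - by rewrite -cardE cardC1 card_Fp.
set k := divn p 4.
have pred_p : p.-1 = (4 * k)%nat by rewrite {1}(divn_eq p 4) p_mod4 addn1 mulnC.
have k_gt0 : (0 < k)%nat.
  by rewrite lt0n; apply: contraTneq p_gt1 => k0; rewrite (divn_eq p 4) p_mod4 -/k k0.
exists (z ^+ k); rewrite -exprD addnn -mul2n.
have : (z ^+ (2 * k)) ^+ 2 = 1 by rewrite -exprM mulnAC -pred_p prim_expr_order.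
move/eqP; rewrite sqrf_eq1 => /orP[/eqP z2k_eq1|/eqP //].
have := prim_order_dvd z_prim (2 * k); rewrite z2k_eq1 eqxx pred_p.
by move/dvdn_leq; rewrite muln_gt0 k_gt0 leq_pmul2r // => /(_ isT).
Qed.

Lemma legendreN (p : nat) (x : 'F_p) : prime p -> modn p 4 = 1%nat ->
  legendre (- x) = legendre x.
Proof.
move=> p_pr p_mod4; have [w w2] := Fp_sqrtN1 p_pr p_mod4.
rewrite /legendre oppr_eq0; case: eqP => // _.
suff -> : [exists y, y * y == - x] = [exists y, y * y == x] by [].
apply/existsP/existsP => -[y /eqP y2]; exists (w * y); apply/eqP;
  by rewrite mulrACA w2 y2 mulN1r ?opprK.
Qed.

End MinusOneSquare.

Local Open Scope R_scope.

Lemma charsumC (p : nat) (I J : {set 'F_p}) : prime p -> modn p 4 = 1%nat ->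
  charsum J I = charsum I J.
Proof.
move=> p_pr p_mod4; rewrite /charsum exchange_big /=.
apply: eq_bigr => i _; apply: eq_bigr => j _.
by rewrite -(legendreN _ p_pr p_mod4) GRing.opprB.
Qed.

Lemma big_setU_disjoint (T : finType) (A B : {set T}) (F : T -> R) :
  [disjoint A & B] ->
  \big[Rplus/0]_(i in A :|: B) F i = \big[Rplus/0]_(i in A) F i + \big[Rplus/0]_(i in B) F i.
Proof. by move=> AB; rewrite -bigU //; apply: eq_bigl => x; rewrite !inE. Qed.

Lemma charsum_setU (p : nat) (I J : {set 'F_p}) : [disjoint I & J] ->
  charsum (I :|: J) (I :|: J) = charsum I I + charsum I J + (charsum J I + charsum J J).
Proof.
move=> IJ; rewrite /charsum big_setU_disjoint //.
by congr Rplus; rewrite -big_split; apply: eq_bigr => i _; rewrite big_setU_disjoint.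
Qed.

Lemma big_Rabs_le (T : finType) (A : {set T}) (F : T -> R) (c : R) :
  (forall i, Rabs (F i) <= c) -> Rabs (\big[Rplus/0]_(i in A) F i) <= INR #|A| * c.
Proof.
move=> F_le; have -> : INR #|A| * c = \big[Rplus/0]_(i in A) c.
  rewrite big_const; elim: #|A| => [|n IHn]; first by rewrite Rmult_0_l.
  by rewrite iterS -IHn S_INR; ring.
apply: (big_ind2 (fun x y => Rabs x <= y)) => // [|x1 x2 y1 y2 le1 le2].
  by rewrite Rabs_R0; lra.
by apply: Rle_trans (Rabs_triang _ _) _; lra.
Qed.

Lemma legendre_abs_le1 (p : nat) (x : 'F_p) : Rabs (legendre x) <= 1.
Proof.
rewrite /legendre; case: ifP => _; first by rewrite Rabs_R0; lra.
by case: ifP => _; rewrite ?Rabs_Ropp Rabs_R1; lra.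
Qed.

Lemma charsum_abs_le (p : nat) (I J : {set 'F_p}) :
  Rabs (charsum I J) <= INR #|I| * INR #|J|.
Proof.
apply: big_Rabs_le => i; rewrite -[INR #|J|]Rmult_1_r.
exact: big_Rabs_le (fun j => legendre_abs_le1 _).
Qed.

Lemma Rpower_le_sqr (c e : R) : 1 <= c -> e <= 2 -> Rpower c e <= c * c.
Proof.
move=> c_ge1 e_le2; have -> : c * c = Rpower c (INR 2) by rewrite Rpower_pow /=; lra.
by apply: Rle_Rpower => //=; lra.
Qed.

Section DiagonalBound.
Variables (p : nat) (alpha beta tau : R).
Hypothesis p_ge1 : 1 <= INR p.
Hypotheses (alpha_ge0 : 0 <= alpha) (beta_gt0 : 0 < beta) (beta_lt2 : beta < 2).
Hypothesis tau_ge : 2 * alpha <= tau * (2 - beta).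
Hypothesis charsum_diag_lt : forall S : {set 'F_p},
  Rpower (INR p) alpha < INR #|S| -> Rabs (charsum S S) < Rpower (INR #|S|) (2 - beta).

Lemma charsum_diag_le_alpha (S : {set 'F_p}) : INR #|S| <= Rpower (INR p) alpha ->
  Rabs (charsum S S) <= Rpower (INR p) (2 * tau).
Proof.
move=> S_le; apply: Rle_trans (charsum_abs_le S S) _.
have S_ge0 := pos_INR #|S|.
apply: Rle_trans (_ : Rpower (INR p) (alpha + alpha) <= _).
  by rewrite Rpower_plus; apply: Rmult_le_compat.
by apply: Rle_Rpower => //; nra.
Qed.

Lemma charsum_diag_gt_alpha (S : {set 'F_p}) (c A : R) :
  1 <= c -> A <= Rpower (INR p) (2 * tau / (2 - beta)) -> INR #|S| <= c * A ->
  Rpower (INR p) alpha < INR #|S| ->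
  Rabs (charsum S S) <= c * c * Rpower (INR p) (2 * tau).
Proof.
move=> c_ge1 A_le S_le S_gt; have S_gt0 : 0 < INR #|S| by apply: Rlt_trans S_gt; apply: exp_pos.
have A_gt0 : 0 < A by nra.
apply/Rlt_le/(Rlt_le_trans _ _ _ (charsum_diag_lt S_gt)).
apply: Rle_trans (Rle_Rpower_l _ _ (2 - beta) _ (conj S_gt0 S_le)) _; first lra.
rewrite -Rpower_mult_distr; [|lra|lra].
apply: Rmult_le_compat; try exact/Rlt_le/exp_pos.
  by apply: Rpower_le_sqr => //; lra.
apply: Rle_trans (Rle_Rpower_l _ _ _ _ (conj A_gt0 A_le)) _; first lra.
by rewrite Rpower_mult; apply: Req_le; congr Rpower; field; lra.
Qed.

Lemma charsum_diag_le (S : {set 'F_p}) (c A : R) :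
  1 <= c -> A <= Rpower (INR p) (2 * tau / (2 - beta)) -> INR #|S| <= c * A ->
  Rabs (charsum S S) <= c * c * Rpower (INR p) (2 * tau).
Proof.
move=> c_ge1 A_le S_le.
have [S_gt|S_le_alpha] := Rlt_le_dec (Rpower (INR p) alpha) (INR #|S|).
  exact: charsum_diag_gt_alpha c_ge1 A_le S_le S_gt.
apply: Rle_trans (charsum_diag_le_alpha S_le_alpha) _.
rewrite -{1}[Rpower _ _]Rmult_1_l; apply: Rmult_le_compat_r; first exact/Rlt_le/exp_pos.
nra.
Qed.

End DiagonalBound.

Lemma Rabs_cross_term_le (u v x t : R) :
  Rabs u <= t -> Rabs v <= t -> Rabs (u + x + (x + v)) <= 4 * t -> Rabs x <= 3 * t.
Proof.
move=> u_le v_le sum_le.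
have := Rabs_triang (u + x + (x + v)) (- (u + v)); have := Rabs_triang u v.
have -> : u + x + (x + v) + - (u + v) = 2 * x by ring.
by rewrite Rabs_Ropp Rabs_mult (Rabs_right 2); lra.
Qed.

Lemma Rle_mul_sqrt (x t k n : R) : 0 <= x -> 0 <= t ->
  x <= k * (t * t) -> x <= n -> x <= t * sqrt (k * n).
Proof.
move=> x_ge0 t_ge0 x_le_kt x_le_n.
rewrite -(sqrt_square x) // -(sqrt_square t) // -sqrt_mult_alt; last nra.
apply: sqrt_le_1_alt.
have := Rmult_le_compat _ _ _ _ x_ge0 x_ge0 x_le_kt x_le_n; nra.
Qed.

Local Close Scope R_scope.

Theorem mainTheorem2 (p : nat) (alpha beta tau : R) :
  prime p -> p %% 4 = 1 ->
  (0 < alpha)%R -> (0 < beta)%R -> (beta < 2)%R ->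
  (forall S : {set 'F_p},
      (Rpower (INR p) alpha < INR #|S|)%R ->
      (Rabs (charsum S S) < Rpower (INR #|S|) (2 - beta))%R) ->
  (2 * alpha / (2 - beta) <= tau)%R ->
  forall I J : {set 'F_p},
    [disjoint I & J] ->
    #|J| <= #|I| ->
    (INR #|I| <= Rpower (INR p) (2 * tau / (2 - beta)))%R ->
    (Rabs (charsum I J) <= Rpower (INR p) tau * sqrt (3 * INR #|I| * INR #|J|))%R.
Proof.
Local Open Scope R_scope.
move=> p_pr p_mod4 alpha_gt0 beta_gt0 beta_lt2 charsum_diag_lt tau_ge I J IJ JI I_le.
have p_ge1 : 1 <= INR p by apply: (le_INR 1); apply/leP/ltnW/prime_gt1.
have tau_ge' : 2 * alpha <= tau * (2 - beta).
  have := Rmult_le_compat_r (2 - beta) _ _ ltac:(lra) tau_ge.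
  by rewrite /Rdiv Rmult_assoc Rinv_l ?Rmult_1_r; lra.
have diag_le := charsum_diag_le p_ge1 (Rlt_le _ _ alpha_gt0) beta_gt0 beta_lt2 tau_ge' charsum_diag_lt.
have J_le_I : INR #|J| <= INR #|I| by apply/le_INR/leP.
have IJ_le : INR #|I :|: J| <= 2 * INR #|I|.
  apply: Rle_trans (_ : INR (#|I| + #|J|) <= _); last by rewrite plus_INR; lra.
  by apply/le_INR/leP; rewrite cardsU leq_subr.
set T := Rpower (INR p) (2 * tau).
have I_diag : Rabs (charsum I I) <= T.
  by have := diag_le I 1 _ (Rle_refl 1) I_le ltac:(lra); rewrite !Rmult_1_l.
have J_diag : Rabs (charsum J J) <= T.
  by have := diag_le J 1 _ (Rle_refl 1) I_le ltac:(lra); rewrite !Rmult_1_l.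
have := diag_le (I :|: J) 2 _ ltac:(lra) I_le IJ_le.
rewrite charsum_setU // (charsumC I J p_pr p_mod4) -/T => IJ_diag.
have cross_le : Rabs (charsum I J) <= 3 * T.
  by apply: Rabs_cross_term_le I_diag J_diag _; lra.
rewrite Rmult_assoc; apply: Rle_mul_sqrt (Rabs_pos _) _ _ (charsum_abs_le I J).
  exact/Rlt_le/exp_pos.
by rewrite -Rpower_plus; have -> : tau + tau = 2 * tau by ring.
Qed.
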